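(* Let $\mathcal{C} \subseteq \mathbb{R}^n$ be a polyhedron with nonempty interior, and let $Z$ be a random vector in $\mathbb{R}^n$ with $\mathbb{E}Z = 0$ and $\mathbb{E}\|Z\|^2 < \infty$. Let $\theta_0 \in \mathcal{C}$ and suppose $\mathbb{P}(Z \in \mathrm{int}\, T_{\mathcal{C}}(\theta_0)) > 0$. Then $$\sup_{\theta^* \notin \mathcal{C} :\ \Pi_{\mathcal{C}}(\theta^* ) = \theta_0} \delta\big(T_{\mathcal{C}}(\Pi_{\mathcal{C}}(\theta^* )) \cap (\theta^* - \Pi_{\mathcal{C}}(\theta^* ))^\perp\big) < \delta(T_{\mathcal{C}}(\theta_0)).$$
   Context: A polyhedron is a set $\{x : Ax \le b\}$. $\Pi_{\mathcal{C}}$ is Euclidean projection onto $\mathcal{C}$; $v^\perp = \{u:\langle u,v\rangle=0\}$; $T_{\mathcal{C}}(\theta_0) = \mathrm{cl}\{\alpha(\theta-\theta_0): \alpha\ge0, \theta\in\mathcal{C}\}$ is the tangent cone. For a closed convex cone $T$, $\delta(T) = \mathbb{E}\|\Pi_T(Z)\|^2$ (generalized statistical dimension with respect to the distribution of $Z$). *)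

From HB Require Import structures.
From mathcomp Require Import all_boot all_order all_algebra.
From mathcomp Require Import all_classical all_reals all_analysis.
Set Implicit Arguments. Unset Strict Implicit. Unset Printing Implicit Defensive.
Import Order.TTheory GRing.Theory Num.Theory.
Import numFieldNormedType.Exports.
Local Open Scope classical_set_scope.
Local Open Scope ring_scope.

Section Defs.
Variables (R : realType) (n : nat).
Notation vec := 'rV[R]_n.

Definition dotv (u v : vec) : R := \sum_(i < n) u 0 i * v 0 i.
Definition sqnorm (u : vec) : R := dotv u u.

Definition polyhedron (C : set vec) : Prop :=
  exists (m : nat) (A : 'M[R]_(n, m)) (b : 'rV[R]_m),
    C = [set x | forall j : 'I_m, (x *m A) 0 j <= b 0 j].

(* Euclidean projection onto C: the (unique, for C closed convex nonempty)
   point of C nearest to x. *)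
Definition projC (C : set vec) (x : vec) : vec :=
  xget 0 [set p | C p /\ forall q, C q -> sqnorm (x - p) <= sqnorm (x - q)].

Definition orth (v : vec) : set vec := [set u | dotv u v = 0].

Definition tangent_cone (C : set vec) (th0 : vec) : set vec :=
  closure [set alpha *: (th - th0) | alpha in [set a : R | 0 <= a] & th in C].

Definition rvec d (T : measurableType d) (P : probability T R)
  (Z : 'I_n -> {RV P >-> R}) (w : T) : vec := \row_i Z i w.

Definition stat_dim d (T : measurableType d) (P : probability T R)
  (Z : 'I_n -> {RV P >-> R}) (K : set vec) : \bar R :=
  (\int[P]_w (sqnorm (projC K (rvec Z w)))%:E)%E.

End Defs.

From HB Require Import structures.
From mathcomp Require Import all_boot all_order all_algebra.
From mathcomp Require Import all_classical all_reals all_analysis.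
From mathcomp Require Import ring lra measurable_realfun.
Import Order.TTheory GRing.Theory Num.Theory.
Import numFieldNormedType.Exports.
Local Open Scope classical_set_scope.
Local Open Scope ring_scope.
Set Implicit Arguments. Unset Strict Implicit. Unset Printing Implicit Defensive.

(** If [projC C ths = th0] with [ths] outside [C], then [v := ths - th0] is an
    outward normal of [C] at [th0], so the tangent cone [T] lies in the
    half-space [<u, v> <= 0] and [F := T ∩ v^⊥] is a closed subcone of [T].
    For closed cones Moreau's decomposition gives [|Π_K z|^2 = |z|^2 - |z - Π_K z|^2],
    hence [|Π_F z|^2 <= |Π_T z|^2] for every [z].  The inequality becomes
    quantitative deep inside [T]: if the sup-norm ball of radius [r] around [z]
    lies in [T], then [z] is at distance at least [r/2] from [v^⊥], and
    [|Π_F z|^2 + r^2/4 <= |Π_T z|^2].  As [Z] falls in the interior of [T] with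
    positive probability, some radius [r] has [P(ball(Z, r) ⊆ T) > 0];
    integrating gives [δ(F) + r^2/4 · P(ball(Z, r) ⊆ T) <= δ(T)] uniformly in
    [ths], and [δ(T) <= E|Z|^2 < ∞] makes the gap strict. *)

Lemma continuous_sum (R : realType) (T : topologicalType) (I : Type) (s : seq I)
    (F : I -> T -> R) :
  (forall i, continuous (F i)) -> continuous (fun x => \sum_(i <- s) F i x).
Proof.
move=> Fc x; elim: s => [|i s IH].
  rewrite (_ : (fun x => _) = cst 0); first exact: cvg_cst.
  by apply/funext => y; rewrite big_nil.
rewrite (_ : (fun x => _) = F i \+ (fun x => \sum_(j <- s) F j x)).
  exact: cvgD (Fc i x) IH.
by apply/funext => y; rewrite big_cons.
Qed.

Section Euclid.
Variables (R : realType) (n : nat).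
Local Notation vec := 'rV[R]_n.
Implicit Types (u v w z : vec) (a : R).

Lemma dotvC u v : dotv u v = dotv v u.
Proof. by apply: eq_bigr => i _; rewrite mulrC. Qed.

Lemma dotvDl u w v : dotv (u + w) v = dotv u v + dotv w v.
Proof. by rewrite /dotv -big_split; apply: eq_bigr => i _; rewrite mxE mulrDl. Qed.

Lemma dotvZl a u v : dotv (a *: u) v = a * dotv u v.
Proof. by rewrite /dotv mulr_sumr; apply: eq_bigr => i _; rewrite mxE mulrA. Qed.

Lemma dotvBl u w v : dotv (u - w) v = dotv u v - dotv w v.
Proof. by rewrite dotvDl -scaleN1r dotvZl mulN1r. Qed.

Lemma dotvZr a u v : dotv v (a *: u) = a * dotv v u.
Proof. by rewrite dotvC dotvZl dotvC. Qed.

Lemma dotvBr u w v : dotv v (u - w) = dotv v u - dotv v w.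
Proof. by rewrite dotvC dotvBl !(dotvC v). Qed.

Lemma dotv0l v : dotv 0 v = 0.
Proof. by rewrite -(scale0r 0) dotvZl mul0r. Qed.

Lemma dotv0r v : dotv v 0 = 0.
Proof. by rewrite dotvC dotv0l. Qed.

Lemma sqnorm0 : sqnorm (0 : vec) = 0.
Proof. exact: dotv0l. Qed.

Lemma sqnorm_ge0 u : 0 <= sqnorm u.
Proof. by apply: sumr_ge0 => i _; rewrite -expr2 sqr_ge0. Qed.

Lemma sqr_coord_le_sqnorm u i : u 0 i ^+ 2 <= sqnorm u.
Proof.
rewrite /sqnorm /dotv (bigD1 i) //= -expr2 lerDl.
by apply: sumr_ge0 => j _; rewrite -expr2 sqr_ge0.
Qed.

Lemma sqnorm_eq0 u : (sqnorm u == 0) = (u == 0).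
Proof.
apply/idP/eqP => [|->]; last by rewrite sqnorm0.
rewrite psumr_eq0 => [/allP u0|i _]; last by rewrite -expr2 sqr_ge0.
apply/rowP => i; rewrite mxE; apply/eqP.
by have := u0 i (mem_index_enum _); rewrite /= mulf_eq0 orbb.
Qed.

Lemma sqnorm_gt0 u : (0 < sqnorm u) = (u != 0).
Proof. by rewrite lt_neqAle sqnorm_ge0 andbT eq_sym sqnorm_eq0. Qed.

Lemma sqnormB u w : sqnorm (u - w) = sqnorm u - 2 * dotv u w + sqnorm w.
Proof. rewrite /sqnorm dotvBl !dotvBr (dotvC w u); ring. Qed.

Lemma sqnormZ a u : sqnorm (a *: u) = a ^+ 2 * sqnorm u.
Proof. by rewrite /sqnorm dotvZl dotvZr mulrA expr2. Qed.

Lemma continuous_dotvl v : continuous (fun u : vec => dotv u v).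
Proof.
apply: continuous_sum => i u.
exact: cvgMl (@coord_continuous _ 1 n 0 i u).
Qed.

Lemma continuous_sqnorm : continuous (@sqnorm R n).
Proof.
apply: continuous_sum => i u.
exact: (cvgM (@coord_continuous _ 1 n 0 i u) (@coord_continuous _ 1 n 0 i u)).
Qed.

Lemma ball_rowP z e y : ball z e y <-> 0 < e /\ forall i, `|z 0 i - y 0 i| < e.
Proof.
split=> [[e0 zy]|[e0 zy]]; split=> // i; first exact: zy.
by move=> j; rewrite (ord1 i); exact: zy.
Qed.

Lemma closed_ball_subset (S : set vec) r : closed [set z | ball z r `<=` S].
Proof.
rewrite -[X in closed X]setCK; apply: open_closedC; rewrite openE => z /=.
move=> /existsNP[y /not_implyP[zy Sy]].
have yz : nbhs z (ball y r).
  by apply: open_nbhs_nbhs; split; [exact: ball_open | exact: ball_sym].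
have sub : ball y r `<=` ~` [set z | ball z r `<=` S].
  by move=> x yx xS; apply/Sy/xS/ball_sym.
exact: filterS sub yz.
Qed.

End Euclid.

Section Projection.
Variables (R : realType) (n : nat).
Local Notation vec := 'rV[R]_n.
Implicit Types (K F : set vec) (u v z : vec).

Lemma continuous_sqnorm_subl z : continuous (fun u : vec => sqnorm (z - u)).
Proof.
move=> u; apply: (continuous_comp (f := fun u => z - u)); last exact: continuous_sqnorm.
exact: cvgB (@cst_continuous _ _ z u) cvg_id.
Qed.

Lemma nearest_point_exists K z : closed K -> K !=set0 ->
  exists p, K p /\ forall q, K q -> sqnorm (z - p) <= sqnorm (z - q).
Proof.
move=> cK [q0 Kq0]; set c := sqnorm (z - q0).
pose K' := K `&` [set q | sqnorm (z - q) <= c].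
have cK' : closed K'.
  apply: closedI => //.
  rewrite (_ : [set q | _] = (fun q => sqnorm (z - q)) @^-1` [set x | x <= c]) //.
  apply: preimage_closed; last exact: closed_le.
  by move=> u _; exact: continuous_sqnorm_subl.
pose I i := `[z 0 i - (1 + c), z 0 i + (1 + c)]%classic.
have K'I : K' `<=` [set q | forall i, I i (q 0 i)].
  move=> q [_ /= qc] i; rewrite /I /= in_itv /=.
  have := sqr_coord_le_sqnorm (z - q) i; rewrite !mxE => zqi.
  have c0 : 0 <= c := sqnorm_ge0 _.
  by apply/andP; split; nra.
have cpK' : compact K'.
  by apply: subclosed_compact cK' (rV_compact _) K'I => i; exact: segment_compact.
have [|p /set_mem[Kp pc] pmin] := compact_EVT_min _ cpK'
    (continuous_subspaceT (@continuous_sqnorm_subl z)).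
  by exists q0; split => /=.
exists p; split => // q Kq; have [qc|/ltW qc] := leP (sqnorm (z - q)) c.
  by apply: pmin; rewrite inE.
exact: le_trans pc qc.
Qed.

Lemma projC_spec K z : closed K -> K !=set0 ->
  K (projC K z) /\ forall q, K q -> sqnorm (z - projC K z) <= sqnorm (z - q).
Proof. by move=> cK K0; apply: (xgetPex 0 (nearest_point_exists z cK K0)). Qed.

Lemma projC_normal K z : closed K -> K !=set0 ->
  (forall x y l, K x -> K y -> 0 <= l <= 1 -> K (x + l *: (y - x))) ->
  forall x, K x -> dotv (x - projC K z) (z - projC K z) <= 0.
Proof.
move=> cK K0 cvxK x Kx; have [Kp pmin] := projC_spec z cK K0.
set p := projC K z in Kp pmin *; set w := x - p; set v := z - p.
have H l : 0 <= l <= 1 -> 2 * l * dotv w v <= l ^+ 2 * sqnorm w.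
  move=> l01; have := pmin _ (cvxK _ _ _ Kp Kx l01).
  rewrite (_ : z - (p + l *: w) = v - l *: w); last by rewrite opprD addrA.
  by rewrite -/v (sqnormB v) sqnormZ dotvZr (dotvC v w); lra.
rewrite leNgt; apply/negP => wv0.
have b0 : 0 <= sqnorm w := sqnorm_ge0 w.
set a := dotv w v in H wv0; set b := sqnorm w in H b0.
(* any [l] in [(0, 1]] with [l * b < 2 * a] contradicts [H] *)
have ab0 : 0 < a + b by lra.
set l := a / (a + b).
have la : l * (a + b) = a by rewrite mulfVK // gt_eqF.
have l0 : 0 < l by apply: divr_gt0.
have l1 : l <= 1 by rewrite ler_pdivrMr // mul1r; lra.
have /H : 0 <= l <= 1 by rewrite l1 ltW.
nra.
Qed.

End Projection.

Section ConeProjection.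
Variables (R : realType) (n : nat).
Local Notation vec := 'rV[R]_n.
Implicit Types (K F : set vec) (u v z : vec).

Definition cone K := forall u t, K u -> 0 <= t -> K (t *: u).

Lemma cone0 K : K !=set0 -> cone K -> K 0.
Proof. by move=> [u Ku] coneK; rewrite -(scale0r u); apply: coneK. Qed.

Lemma coneI_orth K v : cone K -> cone (K `&` orth v).
Proof.
move=> coneK u t [Ku uv] t0; split; first exact: coneK.
by rewrite /orth /= dotvZl uv mulr0.
Qed.

Lemma closed_orth v : closed (orth v).
Proof.
rewrite (_ : orth v = (fun u => dotv u v) @^-1` [set 0]) //.
apply: preimage_closed; last exact: closed_eq.
by move=> u _; exact: continuous_dotvl.
Qed.

Section Moreau.
Variable K : set vec.
Hypotheses (cK : closed K) (K0 : K !=set0) (coneK : cone K).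

(* [t |-> |z - t *: projC K z|^2] is minimal at [t = 1] on [t >= 0]. *)
Lemma dotv_projC z : dotv z (projC K z) = sqnorm (projC K z).
Proof.
have [Kp pmin] := projC_spec z cK K0; set p := projC K z in Kp pmin *.
have H t : 0 <= t -> - 2 * dotv z p + sqnorm p <= - 2 * t * dotv z p + t ^+ 2 * sqnorm p.
  by move=> t0; have := pmin _ (coneK Kp t0); rewrite !sqnormB sqnormZ dotvZr; lra.
have [p0|pn0] := eqVneq p 0; first by rewrite p0 dotv0r sqnorm0.
have b0 : 0 < sqnorm p by rewrite sqnorm_gt0.
have a0 : 0 <= dotv z p / sqnorm p by apply: divr_ge0; have := H 0 (lexx _); lra.
have := H _ a0; set t := dotv z p / sqnorm p => Ht.
have tb : t * sqnorm p = dotv z p by rewrite mulfVK // gt_eqF.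
have : (dotv z p - sqnorm p) ^+ 2 <= 0 by nra.
by rewrite le_eqVlt ltNge sqr_ge0 orbF sqrf_eq0 subr_eq0 => /eqP.
Qed.

Lemma sqnorm_projC z : sqnorm (projC K z) = sqnorm z - sqnorm (z - projC K z).
Proof. by rewrite sqnormB dotv_projC; lra. Qed.

Lemma sqnorm_projC_le z : sqnorm (projC K z) <= sqnorm z.
Proof. by rewrite sqnorm_projC lerBlDr lerDl sqnorm_ge0. Qed.

Lemma sqnorm_projC_id z : K z -> sqnorm (projC K z) = sqnorm z.
Proof.
move=> Kz; apply/le_anti; rewrite sqnorm_projC_le sqnorm_projC /=.
have [_ /(_ z Kz)] := projC_spec z cK K0; rewrite subrr sqnorm0.
by have := sqnorm_ge0 (z - projC K z); lra.
Qed.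

Lemma sqnorm_projC_gtP a z :
  a < sqnorm (projC K z) <-> exists2 q, K q & a < 2 * dotv z q - sqnorm q.
Proof.
have [Kp pmin] := projC_spec z cK K0; have zp := dotv_projC z.
split=> [|[q Kq]]; first by exists (projC K z) => //; lra.
by have := pmin _ Kq; rewrite !sqnormB zp; lra.
Qed.

Lemma open_sqnorm_projC_gt a : open [set z | a < sqnorm (projC K z)].
Proof.
rewrite openE => z /sqnorm_projC_gtP[q Kq zq].
pose f y := dotv y (2 *: q) - sqnorm q.
have fz : {for z, continuous f}.
  exact: cvgB (@continuous_dotvl _ _ (2 *: q) z) (@cst_continuous _ _ (sqnorm q) z).
have /fz fza : nbhs (f z) [set x | a < x].
  by apply: open_nbhs_nbhs; split; [exact: open_gt | rewrite /f /= dotvZr].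
have sub : f @^-1` [set x | a < x] `<=` [set y | a < sqnorm (projC K y)].
  by move=> y; rewrite /f /= dotvZr => ?; apply/sqnorm_projC_gtP; exists q.
exact: filterS sub fza.
Qed.

End Moreau.

Lemma sqnorm_projC_subset K F z : closed K -> K !=set0 -> cone K ->
  closed F -> F !=set0 -> cone F -> F `<=` K -> sqnorm (projC F z) <= sqnorm (projC K z).
Proof.
move=> cK K0 coneK cF F0 coneF FK; rewrite !sqnorm_projC //.
have [/FK KpF _] := projC_spec z cF F0; have [_ /(_ _ KpF)] := projC_spec z cK K0.
lra.
Qed.

End ConeProjection.

Section OrthGap.
Variables (R : realType) (n : nat).
Local Notation vec := 'rV[R]_n.
Implicit Types (K : set vec) (p u v z : vec).

Lemma sqnorm_orth_components_le p z v : dotv p v = 0 -> dotv z p = sqnorm p ->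
  v != 0 -> sqnorm p + dotv z v ^+ 2 / sqnorm v <= sqnorm z.
Proof.
move=> pv zp v0; have s0 : sqnorm v != 0 by rewrite sqnorm_eq0.
set a := dotv z v; set c := a / sqnorm v.
have cs : c * sqnorm v = a by rewrite mulfVK.
have zcvp : dotv (z - c *: v) p = sqnorm p.
  by rewrite dotvBl dotvZl (dotvC v) pv mulr0 subr0.
have := sqnorm_ge0 (z - c *: v - p).
rewrite sqnormB zcvp sqnormB sqnormZ dotvZr -/a.
have -> : c ^+ 2 * sqnorm v = c * a by rewrite -cs; ring.
have -> : a ^+ 2 / sqnorm v = c * a by rewrite /c; field.
lra.
Qed.

Lemma sqr_dotv_ge_ball K z v r : 0 < r -> ball z r `<=` K ->
  (forall u, K u -> dotv u v <= 0) -> v != 0 -> (r / 2) ^+ 2 * sqnorm v <= dotv z v ^+ 2.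
Proof.
move=> r0 zrK Kv v0; have s0 : 0 < sqnorm v by rewrite sqnorm_gt0.
set sg := Num.sqrt (sqnorm v); have sg0 : 0 < sg by rewrite sqrtr_gt0.
have sgs : sg ^+ 2 = sqnorm v by rewrite sqr_sqrtr // ltW.
set t := r / (2 * sg); have t0 : 0 < t by rewrite divr_gt0 // mulr_gt0.
have /Kv : K (z + t *: v).
  apply/zrK/ball_rowP; split => // i; rewrite !mxE opprD addNKr normrN normrM.
  have vi : `|v 0 i| <= sg by rewrite -sqrtr_sqr ler_wsqrtr // sqr_coord_le_sqnorm.
  have tsg : t * sg = r / 2 by rewrite /t; field; rewrite gt_eqF.
  by rewrite (gtr0_norm t0); have := ler_wpM2l (ltW t0) vi; lra.
rewrite dotvDl dotvZl -/(sqnorm v) -sgs (_ : t * sg ^+ 2 = r / 2 * sg); last first.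
  by rewrite /t; field; rewrite gt_eqF.
move=> ztv; have rsg0 : 0 <= r / 2 * sg by rewrite mulr_ge0 ?ltW ?divr_gt0.
by rewrite -[dotv z v ^+ 2]sqrrN -exprMn lerXn2r ?nnegrE //; lra.
Qed.

Lemma sqnorm_projC_orth_gap K v z r : closed K -> K !=set0 -> cone K ->
  (forall u, K u -> dotv u v <= 0) -> v != 0 -> 0 < r -> ball z r `<=` K ->
  sqnorm (projC (K `&` orth v) z) + r ^+ 2 / 4 <= sqnorm (projC K z).
Proof.
move=> cK K0 coneK Kv v0 r0 zrK.
set F := K `&` orth v.
have cF : closed F by apply: closedI => //; exact: closed_orth.
have F0 : F !=set0 by exists 0; split; [exact: cone0 | exact: dotv0l].
have [[_ pv] _] := projC_spec z cF F0.
have := sqnorm_orth_components_le pv (dotv_projC cF F0 (coneI_orth coneK) z) v0.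
have := sqr_dotv_ge_ball r0 zrK Kv v0.
rewrite (sqnorm_projC_id cK K0 coneK (zrK _ (ballxx _ r0))).
rewrite -ler_pdivlMr ?sqnorm_gt0 // (_ : (r / 2) ^+ 2 = r ^+ 2 / 4); last by field.
lra.
Qed.

End OrthGap.

Section Polyhedron.
Variables (R : realType) (n : nat).
Local Notation vec := 'rV[R]_n.
Implicit Types (C : set vec) (u v : vec).

Lemma polyhedron_halfspaces C : polyhedron C ->
  exists m (a : 'I_m -> vec) (b : 'I_m -> R), C = [set x | forall j, dotv x (a j) <= b j].
Proof.
move=> [m [A [b ->]]]; exists m, (fun j => \row_k A k j), (fun j => b 0 j).
suff xA x j : (x *m A) 0 j = dotv x (\row_k A k j).
  by apply/seteqP; split=> x /= xAb j; move: (xAb j); rewrite xA.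
by rewrite !mxE; apply: eq_bigr => k _; rewrite mxE.
Qed.

Lemma nbhs_dotv_gt u v c : c < dotv u v -> nbhs u [set x | c < dotv x v].
Proof.
move=> uv; have : nbhs (dotv u v) [set x | c < x].
  by apply: open_nbhs_nbhs; split; [exact: open_gt | exact: uv].
exact: (@continuous_dotvl _ _ v u).
Qed.

Lemma polyhedron_closed C : polyhedron C -> closed C.
Proof.
move=> /polyhedron_halfspaces[m [a [b ->]]] x Cx j; rewrite leNgt; apply/negP => /nbhs_dotv_gt.
by move=> /Cx[y [/= /(_ j) yab]]; rewrite ltNge yab.
Qed.

Lemma polyhedron_segment C : polyhedron C ->
  forall x y l, C x -> C y -> 0 <= l <= 1 -> C (x + l *: (y - x)).
Proof.
move=> /polyhedron_halfspaces[m [a [b ->]]] x y l /= Cx Cy /andP[l0 l1] j.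
by rewrite dotvDl dotvZl dotvBl; have := Cx j; have := Cy j; nra.
Qed.

End Polyhedron.

Section TangentCone.
Variables (R : realType) (n : nat) (C : set 'rV[R]_n) (th0 : 'rV[R]_n).
Hypothesis Cth0 : C th0.
Local Notation TC := (tangent_cone C th0).

Lemma closed_tangent_cone : closed TC.
Proof. exact: closed_closure. Qed.

Lemma tangent_cone0 : TC 0.
Proof.
apply: subset_closure; exists 0; first by rewrite /= lexx.
by exists th0 => //; rewrite scale0r.
Qed.

Lemma tangent_cone_neq0 : TC !=set0.
Proof. by exists 0; exact: tangent_cone0. Qed.

Lemma cone_tangent_cone : cone TC.
Proof.
move=> u t TCu t0; have [->|tn0] := eqVneq t 0; first by rewrite scale0r; exact: tangent_cone0.
have tp : 0 < t by rewrite lt_neqAle eq_sym tn0 t0.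
move=> B /nbhs_ballP[e e0 eB].
have /TCu[_ [[al al0 [th Cth <-]] uth]] : nbhs u (ball u (e / t)).
  by apply/nbhs_ballP; exists (e / t) => //; exact: divr_gt0.
exists (t *: (al *: (th - th0))); split.
  by exists (t * al); [exact: mulr_ge0 | exists th => //; rewrite scalerA].
apply: eB; move/ball_rowP: uth => [_ uth]; apply/ball_rowP; split=> // i.
by move: (uth i); rewrite !mxE -mulrBr normrM (gtr0_norm tp) ltr_pdivlMr // mulrC.
Qed.

Lemma tangent_cone_normal v : (forall u, C u -> dotv (u - th0) v <= 0) ->
  forall u, TC u -> dotv u v <= 0.
Proof.
move=> Cv u TCu; rewrite leNgt; apply/negP => /nbhs_dotv_gt /TCu.
move=> [_ [[al al0 [th Cth <-]]]]; rewrite /= dotvZl; apply/negP; rewrite -leNgt.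
exact: mulr_ge0_le0 (Cv _ Cth).
Qed.

End TangentCone.

Section RandomVector.
Variables (R : realType) (n : nat) (d : measure_display) (T : measurableType d)
  (P : probability T R) (Z : 'I_n -> {RV P >-> R}).
Local Notation vec := 'rV[R]_n.
Implicit Types (K S U : set vec).

Lemma measurable_rvec_ball (c : vec) e : measurable [set w | ball c e (rvec Z w)].
Proof.
have [e0|e0] := ltP 0 e; last first.
  rewrite (_ : [set w | _] = set0) //; apply/seteqP; split=> // w /ball_rowP[e0' _].
  by have := lt_le_trans e0' e0; rewrite ltxx.
rewrite (_ : [set w | _] = \bigcap_(i in [set: 'I_n]) [set w | `|c 0 i - Z i w| < e]).
  apply: fin_bigcap_measurable => // i _.
  have mZi : measurable_fun setT (fun w => `|c 0 i - Z i w|).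
    by apply: measurableT_comp => //; exact: measurable_funB.
  by rewrite -[X in measurable X]setTI -preimage_itvNyo; apply: mZi => //; exact: measurable_itv.
apply/seteqP; split=> [w /ball_rowP[_ cw] i _|w cw]; first by move: (cw i); rewrite mxE.
by apply/ball_rowP; split=> // i; rewrite mxE; exact: cw.
Qed.

Lemma measurable_rvec_open U : open U -> measurable [set w | U (rvec Z w)].
Proof.
(* [U] is the union of the balls with rational centre and radius [1/(k+1)] inside it *)
move=> oU; pose G (qk : 'rV[rat]_n * nat) := ball (map_mx (@ratr R) qk.1) qk.2.+1%:R^-1.
rewrite (_ : [set w | _] = \bigcup_(qk in [set qk | G qk `<=` U]) [set w | G qk (rvec Z w)]).
  rewrite bigcup_mkcond; apply: countable_bigcupT_measurable => // qk.
  by case: ifP => _; [exact: measurable_rvec_ball | exact: measurable0].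
apply/seteqP; split=> [w /= Uw|w [qk /= GU]]; last exact: GU.
have /nbhs_ballP[e e0 eU] : nbhs (rvec Z w) U by move: oU; rewrite openE; exact.
have [k] := ltr_add_invr (divr_gt0 e0 (ltr0Sn _ 1)); rewrite add0r; set r := _^-1 => re.
have r0 : 0 < r by rewrite invr_gt0.
have /choice[q qZ] i : exists q : rat, ratr q \in `](rvec Z w 0 i - r), (rvec Z w 0 i + r)[.
  by apply: rat_in_itvoo; lra.
have qZr i : `|ratr (q i) - rvec Z w 0 i| < r.
  by move: (qZ i); rewrite in_itv /= ltr_distlC => /andP[? ?]; apply/andP; split; lra.
exists (\row_i q i, k) => /=; last first.
  by apply/ball_rowP; split=> // i; move: (qZr i); rewrite !mxE distrC.
move=> y /ball_rowP[_ qy]; apply: eU; apply/ball_rowP; split=> // i.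
move: (qZr i) (qy i); rewrite !mxE /= -/r => ? ?.
by rewrite (le_lt_trans (ler_distD (ratr (q i)) _ _)) // distrC; lra.
Qed.

Lemma measurable_rvec_closed U : closed U -> measurable [set w | U (rvec Z w)].
Proof.
move=> cU; rewrite -[X in measurable X]setCK; apply: measurableC.
exact: (measurable_rvec_open (closed_openC cU)).
Qed.

Lemma measurable_fun_rvec (f : vec -> R) : (forall a, open [set z | a < f z]) ->
  measurable_fun setT (fun w => f (rvec Z w)).
Proof.
move=> fgt; apply: (measurability _ (RGenOInfty.measurableE R)) => //.
move=> _ [_ [a ->] <-]; rewrite setTI.
rewrite (_ : _ @^-1` _ = [set w | [set z | a < f z] (rvec Z w)]).
  exact: measurable_rvec_open.
by apply/seteqP; split=> w /=; rewrite in_itv /= andbT.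
Qed.

Lemma measurable_sqnorm_rvec : measurable_fun setT (fun w => (sqnorm (rvec Z w))%:E).
Proof.
apply/measurable_EFinP/measurable_fun_rvec => a.
rewrite (_ : [set z | _] = @sqnorm R n @^-1` [set x | a < x]) //.
by apply: open_comp; [move=> z _; exact: continuous_sqnorm | exact: open_gt].
Qed.

Lemma measurable_sqnorm_projC K : closed K -> K !=set0 -> cone K ->
  measurable_fun setT (fun w => (sqnorm (projC K (rvec Z w)))%:E).
Proof.
move=> cK K0 coneK; apply/measurable_EFinP.
exact: (measurable_fun_rvec (f := fun z => sqnorm (projC K z)))
  (open_sqnorm_projC_gt cK K0 coneK).
Qed.

Lemma rvec_ball_measure_gt0 S : (0 < P [set w | interior S (rvec Z w)])%E ->
  exists2 r : R, 0 < r & (0 < P [set w | ball (rvec Z w) r `<=` S])%E.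
Proof.
move=> PS; pose B k := [set w | ball (rvec Z w) k.+1%:R^-1 `<=` S].
have mB k : measurable (B k) := measurable_rvec_closed (@closed_ball_subset R n S _).
have mS : measurable [set w | interior S (rvec Z w)].
  exact: measurable_rvec_open (@open_interior _ S).
have SB : [set w | interior S (rvec Z w)] `<=` \bigcup_k B k.
  move=> w /nbhs_ballP[e e0 eS]; have [k] := ltr_add_invr e0; rewrite add0r => ke.
  by exists k => //; apply: subset_trans eS; exact: le_ball (ltW ke).
suff /existsNP[k /eqP Bk] : ~ (forall k, P (B k) = 0%E).
  by exists k.+1%:R^-1; rewrite ?invr_gt0 // lt0e Bk measure_ge0.
move=> B0; have := measure_sigma_subadditive P mB mS SB.
by rewrite eseries0 => [|k _ _]; [rewrite leNgt PS | exact: B0].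
Qed.

End RandomVector.

Section StatDim.
Variables (R : realType) (n : nat) (d : measure_display) (T : measurableType d)
  (P : probability T R) (Z : 'I_n -> {RV P >-> R}).
Variable K : set 'rV[R]_n.
Hypotheses (cK : closed K) (K0 : K !=set0) (coneK : cone K).

Lemma stat_dim_ge0 : (0 <= stat_dim Z K)%E.
Proof. by apply: integral_ge0 => w _; rewrite lee_fin sqnorm_ge0. Qed.

Lemma stat_dim_fin_num : (\int[P]_w (sqnorm (rvec Z w))%:E < +oo)%E ->
  stat_dim Z K \is a fin_num.
Proof.
move=> EZ2; rewrite ge0_fin_numE ?stat_dim_ge0 //; apply: le_lt_trans EZ2.
apply: ge0_le_integral => //.
- by move=> w _; rewrite lee_fin sqnorm_ge0.
- exact: measurable_sqnorm_projC.
- exact: measurable_sqnorm_rvec.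
- by move=> w _; rewrite lee_fin sqnorm_projC_le.
Qed.

Lemma stat_dim_orth_gap v r : (forall u, K u -> dotv u v <= 0) -> v != 0 -> 0 < r ->
  (stat_dim Z (K `&` orth v) + (r ^+ 2 / 4)%:E * P [set w | ball (rvec Z w) r `<=` K]
   <= stat_dim Z K)%E.
Proof.
move=> Kv v0 r0; set B := [set w | _]; set c := r ^+ 2 / 4.
have c0 : 0 <= c by rewrite divr_ge0 ?sqr_ge0.
have mB : measurable B := measurable_rvec_closed Z (@closed_ball_subset R n K r).
set F := K `&` orth v.
have cF : closed F by apply: closedI => //; exact: closed_orth.
have F0 : F !=set0 by exists 0; split; [exact: cone0 | exact: dotv0l].
have coneF : cone F := coneI_orth coneK.
have mcB : measurable_fun setT (fun w => (c * \1_B w)%:E).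
  by apply/measurable_EFinP; exact: measurable_funM.
have -> : (c%:E * P B = \int[P]_w (c * \1_B w)%:E)%E.
  rewrite (_ : P B = (\int[P]_w (\1_B w)%:E)%E); last by rewrite integral_indic // setIT.
  rewrite -ge0_integralZl_EFin //.
  by apply/measurable_EFinP; exact: measurable_indic.
have gap w : sqnorm (projC F (rvec Z w)) + c * \1_B w <= sqnorm (projC K (rvec Z w)).
  rewrite /indic; case: (boolP (w \in B)) => [/set_mem wB|_].
    by rewrite mulr1; exact: sqnorm_projC_orth_gap.
  by rewrite mulr0 addr0; apply: sqnorm_projC_subset => //; exact: subIsetl.
have cB0 w : (0 <= (c * \1_B w)%:E)%E by rewrite lee_fin mulr_ge0.
rewrite /stat_dim -ge0_integralD //; last 2 first.
- by move=> w _; rewrite lee_fin sqnorm_ge0.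
- exact: measurable_sqnorm_projC.
apply: ge0_le_integral => //.
- by move=> w _; rewrite adde_ge0 // lee_fin sqnorm_ge0.
- by apply: emeasurable_funD => //; exact: measurable_sqnorm_projC.
- exact: measurable_sqnorm_projC.
- by move=> w _; rewrite -EFinD lee_fin.
Qed.

End StatDim.

Theorem lemma3 (R : realType) (n : nat) (d : measure_display)
  (T : measurableType d) (P : probability T R)
  (Z : 'I_n -> {RV P >-> R}) (C : set 'rV[R]_n) (th0 : 'rV[R]_n) :
  polyhedron C ->
  interior C !=set0 ->
  (forall i : 'I_n, ('E_P[Z i] = 0)%E) ->
  (\int[P]_w (sqnorm (rvec Z w))%:E < +oo)%E ->
  C th0 ->
  (0 < P [set w | interior (tangent_cone C th0) (rvec Z w)])%E ->
  (ereal_sup [set s | exists ths : 'rV[R]_n, [/\ ~ C ths, projC C ths = th0 &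
       s = stat_dim Z (tangent_cone C (projC C ths) `&` orth (ths - projC C ths))]]
   < stat_dim Z (tangent_cone C th0))%E.
Proof.
move=> polyC _ _ EZ2 Cth0 PTC.
have cC := polyhedron_closed polyC; have C0 : C !=set0 by exists th0.
set TC := tangent_cone C th0.
have cT : closed TC by exact: closed_tangent_cone.
have T0 : TC !=set0 := tangent_cone_neq0 Cth0.
have coneT : cone TC := cone_tangent_cone Cth0.
have [r r0 PB] := rvec_ball_measure_gt0 PTC.
set B := [set w | _] in PB; set c := r ^+ 2 / 4.
have PBfin : P B \is a fin_num.
  rewrite ge0_fin_numE ?measure_ge0 //; apply: le_lt_trans (ltry 1).
  exact/probability_le1/(measurable_rvec_closed Z (@closed_ball_subset R n TC r)).
have cPB : (0 < c%:E * P B)%E by rewrite mule_gt0 // lte_fin divr_gt0 ?exprn_gt0.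
apply: (@le_lt_trans _ _ (stat_dim Z TC - c%:E * P B)%E); last first.
  by rewrite gte_subl ?stat_dim_fin_num // fin_numM.
apply: ub_ereal_sup => _ [ths [nCths pj ->]]; rewrite pj.
have v0 : ths - th0 != 0 by rewrite subr_eq0; apply: contraPneq nCths => ->.
have Cv := projC_normal ths cC C0 (polyhedron_segment polyC); rewrite pj in Cv.
rewrite leeBrDr ?fin_numM //.
exact: (stat_dim_orth_gap Z cT T0 coneT (tangent_cone_normal Cv) v0 r0).
Qed.
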